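(* Let $G$ be a finite pseudo reflection group and $\Upsilon=\{\mu_s,\tau_i\}$ admissible parameters. Let $V_G=\bigoplus_{i\in P}\mathbb Cv_i$, $\iota(w)v_i=v_{w(i)}$, and let $p_i\in\mathrm{End}(V_G)$ be defined by $p_i(v_i)=\tau_iv_i$ and $p_i(v_j)=\alpha_{i,j}v_i$ for $j\neq i$, where $\alpha_{i,j}=\sum_{s\in R(i,j)}\mu_s$. Then the assignment $T_w\mapsto\iota(w)$ ($w\in G$), $e_i\mapsto p_i$ ($i\in P$) extends to a representation $B_G(\Upsilon)\to\mathrm{End}(V_G)$.
   Context: $G\subset U(V)$ a finite pseudo reflection group with pseudo reflections $R$, reflecting hyperplanes $\{H_i\}_{i\in P}$, $w(i)$ defined by $H_{w(i)}=w(H_i)$, $R(i,j)=\{s\in R:s(H_j)=H_i\}$, $s_i$ the generator of the pointwise stabilizer $G_i$ of $H_i$ with exceptional eigenvalue $e^{2\pi\sqrt{-1}/|G_i|}$. $H_i\pitchfork H_j$ ($i\ne j$) means $\{k:H_i\cap H_j\subset H_k\}=\{i,j\}$; a codimension-2 edge is crossing if it is $H_i\cap H_j$ with $H_i\pitchfork H_j$, noncrossing otherwise; $V_w$ is the fixed space of $w$. Admissible $\Upsilon=\{\mu_s,\tau_i\}$: $\mu_s\ne0$ constant on conjugacy classes of $R$, $\tau_i$ constant on $G$-orbits of $P$. $B_G(\Upsilon)$: unital $\mathbb C$-algebra generated by $T_w$ ($w\in G$, $T_1=1$) and $e_i$ ($i\in P$) with relations (0) $T_{w_1}T_{w_2}=T_{w_1w_2}$;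 (1) $T_{s_i}e_i=e_iT_{s_i}=e_i$; (1') $T_we_i=e_iT_w=e_i$ if $w(H_i)=H_i$ and $H_i\cap V_w$ is a noncrossing codimension-2 edge; (2) $e_i^2=\tau_ie_i$; (3) $T_we_j=e_iT_w$ if $w(H_j)=H_i$; (4) $e_ie_j=e_je_i$ if $H_i\pitchfork H_j$; (5) $e_ie_j=(\sum_{s\in R(i,j)}\mu_sT_s)e_j=e_i(\sum_{s\in R(i,j)}\mu_sT_s)$ if $i\neq j$, $H_i\cap H_j$ noncrossing, $R(i,j)\ne\emptyset$; (6) $e_ie_j=0$ if $i\ne j$, $H_i\cap H_j$ noncrossing, $R(i,j)=\emptyset$. *)

From HB Require Import structures.
From mathcomp Require Import all_boot all_order all_fingroup all_solvable all_algebra.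
Set Implicit Arguments. Unset Strict Implicit. Unset Printing Implicit Defensive.
Import Order.TTheory GRing.Theory Num.Theory.
Local Open Scope ring_scope.

(* Conventions:
   - C : numClosedFieldType plays the role of the complex numbers (with
     conjugation Num.conj); V = C^n, vectors are row vectors, subspaces are
     row spaces of square matrices (mxalgebra).
   - The finite group G is given abstractly (gT : finGroupType) together with
     a faithful unitary representation rho : gT -> 'M_n, i.e. G is identified
     with its image in U(V). An element w acts on a (column) vector v by
     rho w *m v; on row vectors/subspaces this reads X |-> X *m (rho w)^T,
     which is a left action. *)

Section PseudoReflection.
Variables (C : numClosedFieldType) (n : nat) (gT : finGroupType).
Variables (G : {group gT}) (rho : gT -> 'M[C]_n).

Definition unitary_mx (A : 'M[C]_n) : bool :=
  A *m (map_mx Num.conj A)^T == 1%:M.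

Definition faithful_unitary_rep : Prop :=
  [/\ rho 1 = 1%:M,
      {in G &, forall x y, rho (x * y)%g = rho x *m rho y},
      {in G &, injective rho} &
      {in G, forall g, unitary_mx (rho g)}].

Definition gact (w : gT) (X : 'M[C]_n) : 'M[C]_n := X *m (rho w)^T.

Definition fixsp (w : gT) : 'M[C]_n := kermx ((rho w)^T - 1%:M).

Definition is_prefl (s : gT) : bool :=
  (s \in G) && (\rank ((rho s)^T - 1%:M) == 1%N).

Definition prefls : {set gT} := [set s | is_prefl s].

Definition pseudo_reflection_group : Prop :=
  faithful_unitary_rep /\ (G : {set gT}) = <<prefls>>%g.

Variables (P : finType) (H : P -> 'M[C]_n).

Definition reflecting_hyperplanes_indexing : Prop :=
  [/\ (forall i j, (H i == H j)%MS -> i = j),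
      (forall i, exists2 s, is_prefl s & (H i == fixsp s)%MS) &
      (forall s, is_prefl s -> exists i, (H i == fixsp s)%MS)].

Definition wact (w : gT) (i : P) : P :=
  odflt i [pick j | (H j == gact w (H i))%MS].

Definition Rset (i j : P) : {set gT} :=
  [set s | is_prefl s && (gact s (H j) == H i)%MS].

Definition Gstab (i : P) : {set gT} :=
  [set g in G | H i *m ((rho g)^T - 1%:M) == 0].

(* e^{2 pi sqrt(-1)/m} = (e^{pi sqrt(-1)/m})^2, with m.-root (-1) = e^{pi sqrt(-1)/m} *)
Definition zeta (m : nat) : C := (m.-root (-1)) ^+ 2.

Definition sgen (i : P) : gT :=
  odflt 1%g [pick g in Gstab i |
     (Gstab i == <[g]>%g) && eigenvalue (rho g)^T (zeta #|Gstab i|)].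

Definition crossing_pair (i j : P) : bool :=
  (i != j) && [forall k, ((H i :&: H j) <= H k)%MS ==> ((k == i) || (k == j))].

Definition edge2 (X : 'M[C]_n) : bool :=
  [exists i, exists j, (i != j) && (X == (H i :&: H j))%MS].

Definition crossing_edge (X : 'M[C]_n) : bool :=
  [exists i, exists j, crossing_pair i j && (X == (H i :&: H j))%MS].

Definition noncrossing_edge (X : 'M[C]_n) : bool :=
  edge2 X && ~~ crossing_edge X.

Variables (mu : gT -> C) (tau : P -> C).

Definition admissible : Prop :=
  [/\ (forall s, is_prefl s -> mu s != 0),
      (forall s g, is_prefl s -> g \in G -> mu (s ^ g)%g = mu s) &
      (forall w i, w \in G -> tau (wact w i) = tau i)].

(* The pair (T, e) of endomorphisms of a space of dimension d satisfies the
   defining relations of B_G(Upsilon); by the universal property of an algebra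
   given by generators and relations, this is exactly a (unital) representation
   B_G(Upsilon) -> 'M_d with T_w |-> T w, e_i |-> e i. *)
Definition BG_rep (d : nat) (T : gT -> 'M[C]_d) (e : P -> 'M[C]_d) : Prop :=
  [/\ T 1%g = 1%:M,
      {in G &, forall w1 w2, T w1 *m T w2 = T (w1 * w2)%g},
      (forall i, T (sgen i) *m e i = e i /\ e i *m T (sgen i) = e i),
      (forall w i, w \in G -> (gact w (H i) == H i)%MS ->
         noncrossing_edge (H i :&: fixsp w)%MS ->
         T w *m e i = e i /\ e i *m T w = e i) &
      [/\
          (forall i, e i *m e i = tau i *: e i),
          (forall w i j, w \in G -> (gact w (H j) == H i)%MS ->
             T w *m e j = e i *m T w),
          (forall i j, crossing_pair i j -> e i *m e j = e j *m e i),
          (forall i j, i != j -> noncrossing_edge (H i :&: H j)%MS ->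
             Rset i j != set0 ->
             e i *m e j = (\sum_(s in Rset i j) mu s *: T s) *m e j /\
             e i *m e j = e i *m (\sum_(s in Rset i j) mu s *: T s)) &
          (forall i j, i != j -> noncrossing_edge (H i :&: H j)%MS ->
             Rset i j = set0 -> e i *m e j = 0)]].

(* V_G = \bigoplus_{i in P} C v_i, basis indexed via enum_val : 'I_#|P| -> P;
   column convention: (M a b) = coefficient of v_a in M v_b. *)
Definition iotaV (w : gT) : 'M[C]_#|P| :=
  \matrix_(a, b) (wact w (enum_val b) == enum_val a)%:R.

Definition alpha (i j : P) : C := \sum_(s in Rset i j) mu s.

Definition pmx (i : P) : 'M[C]_#|P| :=
  \matrix_(a, b) (if enum_val a == i then
                    (if enum_val b == i then tau i else alpha i (enum_val b))
                  else 0).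

End PseudoReflection.

From Pilot Require Import Defs.
From HB Require Import structures.
From mathcomp Require Import all_boot all_order all_fingroup all_solvable all_algebra.
Set Implicit Arguments. Unset Strict Implicit. Unset Printing Implicit Defensive.
Import Order.TTheory GRing.Theory Num.Theory.
Local Open Scope ring_scope.

(* In the basis (v_i), iota(w) is the permutation matrix of the action i |-> w(i)
   of G on the hyperplanes, and p_i has rank one: its only nonzero row is row i,
   with entry tau_i at v_i and alpha_(i,p) at v_p.  Every defining relation of
   B_G then follows from three facts: i |-> w(i) is an action; these row
   coefficients are G-invariant, because conjugation by w maps R(i,j) onto
   R(w(i),w(j)) and mu is a class function; and R(i,j) is empty when H_i and
   H_j cross, because a pseudo-reflection s with s(H_j) = H_i <> H_j fixes
   H_i :&: H_j pointwise, so its reflecting hyperplane is a third hyperplane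
   through that edge. *)

Section LinearAlgebra.
Variables (F : fieldType) (n : nat).
Implicit Types A B : 'M[F]_n.

Lemma mulmx_kermx_subr1 m A (X : 'M_(m, n)) :
  (X <= kermx (A - 1%:M))%MS -> X *m A = X.
Proof. by move/sub_kermxP; rewrite mulmxBr mulmx1; apply: subr0_eq. Qed.

Lemma kermx_conj A B : B \in unitmx ->
  (kermx (invmx B *m A *m B) :=: kermx A *m B)%MS.
Proof.
move=> uB; apply/eqmxP/andP; split; last first.
  by apply/sub_kermxP; rewrite !mulmxA mulmxK // mulmx_ker !mul0mx.
set X := kermx _; have XBA : X *m invmx B *m A = 0.
  by rewrite -(mulmxK uB (_ *m A)) -2!(mulmxA X) mulmx_ker mul0mx.
by rewrite -[X](mulmxKV uB) submxMr //; apply/sub_kermxP.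
Qed.

Lemma mxrank_conj A B : B \in unitmx -> \rank (invmx B *m A *m B) = \rank A.
Proof.
move=> uB; rewrite mxrankMfree ?row_free_unit //.
by rewrite eqmxMfull // row_full_unit unitmx_inv.
Qed.

Lemma eqmx_stable_image m1 m2 A (U : 'M_(m1, n)) (W : 'M_(m2, n)) :
  A \in unitmx -> (W *m A :=: U)%MS -> (U *m A <= U)%MS -> (U :=: W)%MS.
Proof.
move=> uA WA UA_U; have UA : (U *m A :=: U)%MS.
  apply/eqmxP; rewrite -(geq_leqif (mxrank_leqif_eq UA_U)).
  by rewrite mxrankMfree ?row_free_unit.
by have := eqmxMr (invmx A) (eqmx_trans UA (eqmx_sym WA)); rewrite !mulmxK.
Qed.

(* If [X *m (A - 1)] were nonzero it would span the line [A - 1], which then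
   lies in [U], and [U *m A = U *m (A - 1) + U] would be inside [U]. *)
Lemma sub_kermx_subr1_rank1 m1 m A (U : 'M_(m1, n)) (X : 'M_(m, n)) :
  \rank (A - 1%:M) = 1%N -> ~~ (U *m A <= U)%MS ->
  (X <= U)%MS -> (X *m A <= U)%MS -> (X <= kermx (A - 1%:M))%MS.
Proof.
move=> rk1 UA_U XU XA_U; apply/sub_kermxP; apply: contraNeq UA_U => nzX.
have XA1 : (X *m (A - 1%:M) <= A - 1%:M)%MS by apply: submxMl.
have A1U : (A - 1%:M <= U)%MS.
  apply: submx_trans (_ : X *m (A - 1%:M) <= U)%MS.
    by rewrite -(geq_leqif (mxrank_leqif_sup XA1)) rk1 lt0n mxrank_eq0.
  by rewrite mulmxBr mulmx1 addmx_sub // eqmx_opp.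
have -> : U *m A = U *m (A - 1%:M) + U by rewrite mulmxBr mulmx1 subrK.
by rewrite addmx_sub // (submx_trans (submxMl _ _) A1U).
Qed.

End LinearAlgebra.

Section BasisMatrices.
Variables (R : pzRingType) (P : finType).
Implicit Types (f g : P -> P) (c d : P -> R) (i j : P).

Definition fun_mx f : 'M[R]_#|P| :=
  \matrix_(a, b) (f (enum_val b) == enum_val a)%:R.

Definition row_at_mx i c : 'M[R]_#|P| :=
  \matrix_(a, b) (if enum_val a == i then c (enum_val b) else 0).

Lemma sum_enum_single (F : 'I_#|P| -> R) p :
  (forall a, enum_val a != p -> F a = 0) -> \sum_a F a = F (enum_rank p).
Proof.
move=> F0; rewrite (bigD1 (enum_rank p)) //= big1 ?addr0 // => a a_p.
by apply: F0; apply: contraNneq a_p => <-; rewrite enum_valK.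
Qed.

Lemma eq_fun_mx f g : f =1 g -> fun_mx f = fun_mx g.
Proof. by move=> fg; apply/matrixP => a b; rewrite !mxE fg. Qed.

Lemma eq_row_at_mx i c d : c =1 d -> row_at_mx i c = row_at_mx i d.
Proof. by move=> cd; apply/matrixP => a b; rewrite !mxE cd. Qed.

Lemma fun_mx_id f : f =1 id -> fun_mx f = 1%:M.
Proof.
by move=> f1; apply/matrixP => a b; rewrite !mxE f1 (inj_eq enum_val_inj) eq_sym.
Qed.

Lemma fun_mxM f g : fun_mx f *m fun_mx g = fun_mx (f \o g).
Proof.
apply/matrixP => a b; rewrite !mxE (sum_enum_single (p := g (enum_val b))).
  by rewrite !mxE enum_rankK eqxx mulr1.
by move=> c; rewrite eq_sym !mxE => /negPf ->; rewrite mulr0.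
Qed.

Lemma fun_mx_row_at f i c : fun_mx f *m row_at_mx i c = row_at_mx (f i) c.
Proof.
apply/matrixP => a b; rewrite !mxE (sum_enum_single (p := i)).
  by rewrite !mxE enum_rankK eqxx eq_sym; case: eqP; rewrite ?mul1r ?mul0r.
by move=> e; rewrite [row_at_mx _ _ _ _]mxE => /negPf ->; rewrite mulr0.
Qed.

Lemma row_at_fun_mx i c f : row_at_mx i c *m fun_mx f = row_at_mx i (c \o f).
Proof.
apply/matrixP => a b; rewrite !mxE (sum_enum_single (p := f (enum_val b))).
  by rewrite !mxE enum_rankK eqxx mulr1.
by move=> e; rewrite eq_sym !mxE => /negPf ->; rewrite mulr0.
Qed.

Lemma row_at_mxM i j c d :
  row_at_mx i c *m row_at_mx j d = c j *: row_at_mx i d.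
Proof.
apply/matrixP => a b; rewrite !mxE (sum_enum_single (p := j)).
  by rewrite !mxE enum_rankK eqxx; case: ifP; rewrite ?mulr0 ?mul0r.
by move=> e; rewrite [row_at_mx j _ _ _]mxE => /negPf ->; rewrite mulr0.
Qed.

End BasisMatrices.

Arguments fun_mx {R P} f.

Section HyperplaneRepresentation.
Variables (C : numClosedFieldType) (n : nat) (gT : finGroupType).
Variables (G : {group gT}) (rho : gT -> 'M[C]_n) (P : finType) (H : P -> 'M[C]_n).
Hypothesis rho1 : rho 1%g = 1%:M.
Hypothesis rhoM : {in G &, forall x y, rho (x * y)%g = rho x *m rho y}.
Hypothesis hypH : reflecting_hyperplanes_indexing G rho H.

Local Notation R g := (rho g)^T.
Local Notation gact := (Defs.gact rho).
Local Notation fixsp := (Defs.fixsp rho).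
Local Notation is_prefl := (Defs.is_prefl G rho).
Local Notation wact := (Defs.wact rho H).
Local Notation Rset := (Defs.Rset G rho H).

Lemma trhoM x y : x \in G -> y \in G -> R (x * y)%g = R y *m R x.
Proof. by move=> Gx Gy; rewrite rhoM // trmx_mul. Qed.

Lemma trho_mulV g : g \in G -> R g *m R (g^-1)%g = 1%:M.
Proof. by move=> Gg; rewrite -trhoM ?groupV // mulVg rho1 trmx1. Qed.

Lemma trho_unit g : g \in G -> R g \in unitmx.
Proof. by move=> Gg; case: (mulmx1_unit (trho_mulV Gg)). Qed.

Lemma trhoV g : g \in G -> R (g^-1)%g = invmx (R g).
Proof.
move=> Gg; rewrite -[LHS]mul1mx -(mulVmx (trho_unit Gg)) -mulmxA.
by rewrite trho_mulV // mulmx1.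
Qed.

Lemma trhoJ_subr1 s g : s \in G -> g \in G ->
  R (s ^ g)%g - 1%:M = invmx (R (g^-1)%g) *m (R s - 1%:M) *m R (g^-1)%g.
Proof.
move=> Gs Gg; rewrite trhoV // invmxK mulmxBr mulmxBl mulmx1 mulmxV ?trho_unit //.
by rewrite /conjg !trhoM ?groupV ?groupM // trhoV // mulmxA.
Qed.

Lemma gact1 X : gact 1%g X = X.
Proof. by rewrite /Defs.gact rho1 trmx1 mulmx1. Qed.

Lemma gactM x y X : x \in G -> y \in G -> gact (x * y)%g X = gact x (gact y X).
Proof. by move=> Gx Gy; rewrite /Defs.gact trhoM // mulmxA. Qed.

Lemma fixspJ s g : s \in G -> g \in G ->
  (fixsp (s ^ g)%g :=: gact (g^-1)%g (fixsp s))%MS.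
Proof.
by move=> Gs Gg; rewrite /Defs.fixsp trhoJ_subr1 //; exact/kermx_conj/trho_unit/groupVr.
Qed.

Lemma prefl_group s : is_prefl s -> s \in G.
Proof. by case/andP. Qed.

Lemma preflJ s g : is_prefl s -> g \in G -> is_prefl (s ^ g)%g.
Proof.
move=> /andP[Gs rk1] Gg; rewrite /Defs.is_prefl groupJ //=.
by rewrite trhoJ_subr1 // mxrank_conj // trho_unit ?groupV.
Qed.

Lemma hyperplane_inj i j : (H i :=: H j)%MS -> i = j.
Proof. by case: hypH => inj _ _ /eqmxP; apply: inj. Qed.

Lemma hyperplane_prefl i : exists2 s, is_prefl s & (H i :=: fixsp s)%MS.
Proof. by case: hypH => _ h _; have [s ps /eqmxP] := h i; exists s. Qed.

Lemma prefl_hyperplane s : is_prefl s -> exists i, (H i :=: fixsp s)%MS.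
Proof. by case: hypH => _ _ h /h[i /eqmxP]; exists i. Qed.

Lemma wactE w i : w \in G -> (H (wact w i) :=: gact w (H i))%MS.
Proof.
move=> Gw; have [s ps Hi] := hyperplane_prefl i.
have [k Hk] := prefl_hyperplane (preflJ ps (groupVr Gw)).
have wHi : (H k :=: gact w (H i))%MS.
  apply: eqmx_trans Hk (eqmx_trans (fixspJ (prefl_group ps) (groupVr Gw)) _).
  by rewrite invgK; apply: eqmx_sym; apply: eqmxMr.
rewrite /Defs.wact; case: pickP => [k' /eqmxP // | none].
by have := none k; move/eqmxP: wHi => ->.
Qed.

Lemma wact_eq w i j : w \in G -> (gact w (H i) == H j)%MS -> wact w i = j.
Proof. by move=> Gw /eqmxP wHi; apply/hyperplane_inj/(eqmx_trans (wactE i Gw)). Qed.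

Lemma wact1 i : wact 1%g i = i.
Proof. by apply: wact_eq; rewrite ?group1 // gact1; apply/eqmxP. Qed.

Lemma wactM x y i : x \in G -> y \in G -> wact (x * y)%g i = wact x (wact y i).
Proof.
move=> Gx Gy; apply: wact_eq; rewrite ?groupM //; apply/eqmxP; rewrite gactM //.
exact: eqmx_trans (eqmxMr _ (eqmx_sym (wactE i Gy))) (eqmx_sym (wactE _ Gx)).
Qed.

Lemma wactK w : w \in G -> cancel (wact w) (wact (w^-1)%g).
Proof. by move=> Gw i; rewrite -wactM ?groupV // mulVg wact1. Qed.

Lemma wact_inj w : w \in G -> injective (wact w).
Proof. by move=> Gw; apply: can_inj (wactK Gw). Qed.

Lemma RsetE i j s : (s \in Rset i j) = is_prefl s && (wact s j == i).
Proof.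
rewrite inE; apply/andP/andP => -[ps e]; split => //.
  exact/eqP/(wact_eq (prefl_group ps)).
by apply/eqmxP; rewrite -(eqP e); apply/eqmx_sym/wactE/prefl_group.
Qed.

Lemma RsetJ w i j : w \in G ->
  Rset (wact w i) (wact w j) = [set (s ^ w^-1)%g | s in Rset i j].
Proof.
move=> Gw; apply/setP => t; apply/idP/imsetP.
  rewrite RsetE => /andP[pt /eqP tj]; exists (t ^ w)%g; last by rewrite conjgK.
  have Gt := prefl_group pt.
  by rewrite RsetE preflJ //= /conjg !wactM ?groupV ?groupM // tj wactK.
case=> s + ->; rewrite !RsetE => /andP[ps /eqP sj]; have Gs := prefl_group ps.
by rewrite preflJ ?groupV //= /conjg invgK !wactM ?(groupM, groupV) // wactK // sj.
Qed.

Lemma Rset_crossing i j : crossing_pair H i j -> Rset i j = set0.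
Proof.
move=> /andP[nij /forallP cross]; apply/setP => s; rewrite in_set0; apply/negP.
rewrite inE /Defs.gact => /andP[ps /eqmxP sHj].
have [uRs rk1] := (trho_unit (prefl_group ps), eqP (proj2 (andP ps))).
have [k Hk] := prefl_hyperplane ps.
have Hk_fixed : H k *m R s = H k by apply: mulmx_kermx_subr1; rewrite Hk.
have not_stable : ~~ (H i *m R s <= H i)%MS.
  by apply: contra nij => /(eqmx_stable_image uRs sHj)/hyperplane_inj ->.
have ki : k != i by apply: contraNneq not_stable => <-; rewrite Hk_fixed.
have kj : k != j.
  apply: contraNneq nij => kj; rewrite -kj Hk_fixed in sHj.
  by rewrite -kj (hyperplane_inj sHj).
have cap_k : (H i :&: H j <= H k)%MS.
  rewrite Hk; apply: sub_kermx_subr1_rank1 rk1 not_stable (capmxSl _ _) _.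
  by rewrite -sHj submxMr ?capmxSr.
by have := cross k; rewrite cap_k /= (negPf ki) (negPf kj).
Qed.

Lemma crossing_pairC i j : crossing_pair H i j = crossing_pair H j i.
Proof.
rewrite /crossing_pair eq_sym capmxC; congr (_ && _).
by apply: eq_forallb => k; rewrite orbC.
Qed.

Lemma sgen_stab i : sgen G rho H i \in G /\ wact (sgen G rho H i) i = i.
Proof.
rewrite /sgen; case: pickP => [g /andP[] | _] /=; last by rewrite group1 wact1.
rewrite inE => /andP[Gg /eqP/sub_kermxP Hi_fixed] _; split => //.
apply: wact_eq => //; apply/eqmxP; rewrite /Defs.gact.
by rewrite (mulmx_kermx_subr1 Hi_fixed).
Qed.

Variables (mu : gT -> C) (tau : P -> C).
Hypothesis mu_conj : forall s g, is_prefl s -> g \in G -> mu (s ^ g)%g = mu s.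
Hypothesis tau_wact : forall w i, w \in G -> tau (wact w i) = tau i.

Local Notation alpha := (Defs.alpha G rho H mu).
Local Notation iotaV := (Defs.iotaV rho H).
Local Notation pmx := (Defs.pmx G rho H mu tau).

Definition pcoef i p := if p == i then tau i else alpha i p.

Lemma iotaVE w : iotaV w = fun_mx (wact w).
Proof. by []. Qed.

Lemma pmxE i : pmx i = row_at_mx i (pcoef i).
Proof. by []. Qed.

Lemma alpha_wact w i j : w \in G -> alpha (wact w i) (wact w j) = alpha i j.
Proof.
move=> Gw; rewrite /Defs.alpha RsetJ // big_imset /=; last first.
  by move=> x y _ _ /conjg_inj.
by apply: eq_bigr => s; rewrite RsetE => /andP[ps _]; apply/mu_conj/groupVr.
Qed.

Lemma pcoef_wact w i p : w \in G -> pcoef (wact w i) (wact w p) = pcoef i p.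
Proof. by move=> Gw; rewrite /pcoef (inj_eq (wact_inj Gw)) tau_wact ?alpha_wact. Qed.

Lemma iotaVM x y : x \in G -> y \in G -> iotaV x *m iotaV y = iotaV (x * y)%g.
Proof. by move=> Gx Gy; rewrite fun_mxM; apply: eq_fun_mx => p; rewrite wactM. Qed.

Lemma iotaV_pmx w i j : w \in G -> wact w j = i ->
  iotaV w *m pmx j = pmx i *m iotaV w.
Proof.
move=> Gw wj; rewrite iotaVE !pmxE fun_mx_row_at row_at_fun_mx wj.
by apply: eq_row_at_mx => p /=; rewrite -wj pcoef_wact.
Qed.

Lemma iotaV_pmx_stab w i : w \in G -> wact w i = i ->
  iotaV w *m pmx i = pmx i /\ pmx i *m iotaV w = pmx i.
Proof.
move=> Gw wi; have wE : iotaV w *m pmx i = pmx i.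
  by rewrite iotaVE pmxE fun_mx_row_at wi.
by rewrite -(iotaV_pmx Gw wi).
Qed.

Lemma pmxM i j : pmx i *m pmx j = pcoef i j *: row_at_mx i (pcoef j).
Proof. by rewrite !pmxE row_at_mxM. Qed.

Lemma pmxM_neq i j : i != j -> pmx i *m pmx j = alpha i j *: row_at_mx i (pcoef j).
Proof. by rewrite pmxM /pcoef eq_sym => /negPf ->. Qed.

Lemma pmxM_Rset0 i j : i != j -> Rset i j = set0 -> pmx i *m pmx j = 0.
Proof. by move=> nij R0; rewrite pmxM_neq // /Defs.alpha R0 big_set0 scale0r. Qed.

Lemma pmxM_Rset i j : i != j ->
  pmx i *m pmx j = (\sum_(s in Rset i j) mu s *: iotaV s) *m pmx j /\
  pmx i *m pmx j = pmx i *m (\sum_(s in Rset i j) mu s *: iotaV s).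
Proof.
move=> nij; have sj s : s \in Rset i j -> s \in G /\ wact s j = i.
  by rewrite RsetE => /andP[/prefl_group Gs /eqP].
have -> : pmx i *m pmx j = (\sum_(s in Rset i j) mu s *: iotaV s) *m pmx j.
  rewrite pmxM_neq // mulmx_suml scaler_suml; apply: eq_bigr => s /sj[_ sji].
  by rewrite -scalemxAl iotaVE pmxE fun_mx_row_at sji.
split=> //; rewrite mulmx_suml mulmx_sumr; apply: eq_bigr => s /sj[Gs sji].
by rewrite -scalemxAl -scalemxAr (iotaV_pmx Gs sji).
Qed.

End HyperplaneRepresentation.

Theorem theorem5p2 (C : numClosedFieldType) (n : nat) (gT : finGroupType)
    (G : {group gT}) (rho : gT -> 'M[C]_n) (P : finType) (H : P -> 'M[C]_n)
    (mu : gT -> C) (tau : P -> C)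
    (hG : pseudo_reflection_group G rho)
    (hH : reflecting_hyperplanes_indexing G rho H)
    (hU : admissible G rho H mu tau) :
  BG_rep G rho H mu tau (iotaV rho H) (pmx G rho H mu tau).
Proof.
have [[rho1 rhoM _ _] _] := hG; have [_ mu_conj tau_wact] := hU.
have wact_eq := wact_eq rho1 rhoM hH.
have iotaV_pmx := iotaV_pmx rho1 rhoM hH mu_conj tau_wact.
have iotaV_pmx_stab := iotaV_pmx_stab rho1 rhoM hH mu_conj tau_wact.
have Rset_crossing := Rset_crossing rho1 rhoM hH.
split.
- by rewrite iotaVE; apply: fun_mx_id; apply: (wact1 rho1 rhoM hH).
- by move=> x y Gx Gy; rewrite (iotaVM rho1 rhoM hH).
- by move=> i; have [Gs si] := sgen_stab rho1 rhoM hH i; apply: iotaV_pmx_stab.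
- by move=> w i Gw /(wact_eq _ _ _ Gw) wi _; apply: iotaV_pmx_stab.
split.
- by move=> i; rewrite pmxM /pcoef eqxx pmxE.
- by move=> w i j Gw /(wact_eq _ _ _ Gw); apply: iotaV_pmx.
- move=> i j ij; have [nij _] := andP ij.
  have ji : crossing_pair H j i by rewrite crossing_pairC.
  by rewrite !pmxM_Rset0 ?Rset_crossing // eq_sym.
- by move=> i j nij _ _; apply: (pmxM_Rset rho1 rhoM hH mu_conj tau_wact).
- by move=> i j nij _; apply: pmxM_Rset0.
Qed.
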